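(* Let $d\ge 1$, $q\ge 2$ be integers and let $\mathfrak{X}=H(d,q)$ be the Hamming scheme on $X=\{0,1,\dots,q-1\}^d$, with base vertex $u_0\in X$. Then for every $t=0,1,\dots,d$, \[ \mathrm{Hom}_0(X)+\mathrm{Hom}_1(X)+\cdots+\mathrm{Hom}_t(X)=L_0(X)+L_1(X)+\cdots+L_t(X). \]
   Context: $\mathcal{F}(X)$ denotes the space of real-valued functions on $X$ (identified with $\mathbb{R}^X$). The Hamming scheme $H(d,q)$ has relations $R_r=\{(x,y)\in X\times X : x,y \text{ differ in exactly } r \text{ coordinates}\}$, $r=0,\dots,d$. The shells are $X_r=\{x\in X : (u_0,x)\in R_r\}$. For $z\in X_j$ define $f_z\in\mathcal{F}(X)$ by $f_z(x)=1$ if $x\in X_i$ for some $i\ge j$ and $(x,z)\in R_{i-j}$, and $f_z(x)=0$ otherwise (equivalently, $z$ lies on a geodesic between $u_0$ and $x$ in the Hamming graph). Set $\mathrm{Hom}_j(X)=\mathrm{span}\{f_z : z\in X_j\}$. Let $E_0,\dots,E_d$ be the primitive idempotents of the Bose–Mesner algebra in the $Q$-polynomial ordering, i.e. $E_j$ is the orthogonal projection onto the eigenspace of the adjacency matrix of the Hamming graph (adjacency $=R_1$) for the eigenvalue $(q-1)d-qj$; $L_j(X)$ is the column space of $E_j$. *)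

From HB Require Import structures.
From mathcomp Require Import all_boot all_order all_algebra.
Set Implicit Arguments. Unset Strict Implicit. Unset Printing Implicit Defensive.
Import Order.TTheory GRing.Theory Num.Theory.
Local Open Scope ring_scope.

Definition hvert (d q : nat) : finType := {ffun 'I_d -> 'I_q}.

(* Hamming distance: (x,y) \in R_r  iff  hdist x y = r. *)
Definition hdist (d q : nat) (x y : hvert d q) : nat := #|[set i | x i != y i]|.

(* F(X) = R^X, represented as row vectors indexed by X (via enum_rank). *)
Definition fvec (R : fieldType) (d q : nat) (f : hvert d q -> R) : 'rV[R]_#|hvert d q| :=
  \row_i f (enum_val i).

Definition fz (R : fieldType) (d q : nat) (u0 z : hvert d q) : 'rV[R]_#|hvert d q| :=
  fvec (fun x => if (hdist u0 z <= hdist u0 x)%N && (hdist x z == hdist u0 x - hdist u0 z)%N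
                 then 1 else 0).

Definition HomSp (R : fieldType) (d q : nat) (u0 : hvert d q) (j : nat) :=
  (\sum_(z : hvert d q | hdist u0 z == j) <<fz R u0 z>>)%MS.

Definition hadj (R : fieldType) (d q : nat) : 'M[R]_#|hvert d q| :=
  \matrix_(i, k) (hdist (enum_val i) (enum_val k) == 1)%:R.

(* Eigenvalue theta_j = (q-1)d - qj (Q-polynomial ordering). *)
Definition theta (R : fieldType) (d q j : nat) : R :=
  ((q - 1) * d)%:R - (q * j)%:R.

(* L_j(X) = column space of E_j = the theta_j-eigenspace of the adjacency
   matrix (E_j is the orthogonal projection onto it; the adjacency matrix is
   symmetric so row/column conventions agree). *)
Definition Lsp (R : fieldType) (d q j : nat) :=
  eigenspace (hadj R d q) (theta R d q j).
Arguments HomSp R {d q} u0 j.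
Arguments Lsp R d q j.

From mathcomp Require Import all_boot all_order all_algebra zify.
Set Implicit Arguments. Unset Strict Implicit. Unset Printing Implicit Defensive.
Import Order.TTheory GRing.Theory Num.Theory.
Local Open Scope ring_scope.

(* The Hamming graph is the Cartesian product of d copies of K_q, so a
   product function x |-> prod_i G_i(x_i) whose factors are eigenvectors of
   K_q is an eigenvector, with the sum of the factor eigenvalues.  For each
   coordinate, span{1, [c = b] : b <> u0_i} = span{1, q[c = b] - 1 : b <> u0_i};
   the first family gives the f_z (z in X_j being the product with j
   non-constant factors), the second gives eigenvectors g_z for theta_j.
   Both changes of basis are triangular for the number of non-constant
   factors, so Hom_0 + ... + Hom_t = span{g_z : z in X_0 u ... u X_t}, which
   lies in L_0 + ... + L_t.  All the g_z together span F(X), and the g_z of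
   weight > t lie in L_{t+1} + ... + L_d; since the eigenspaces form a direct
   sum, L_0 + ... + L_t is contained in the span of the g_z of weight <= t. *)

Lemma prodr_natb (R : comNzRingType) (I : finType) (b : pred I) :
  \prod_i ((b i)%:R : R) = [forall i, b i]%:R.
Proof.
case: forallP => [bT | /forallP]; first by rewrite big1 // => i _; rewrite bT.
rewrite negb_forall => /existsP[i /negbTE bi].
by rewrite (bigD1 i) //= bi mul0r.
Qed.

Lemma sumr_natb (R : nzSemiRingType) (I : finType) (b : pred I) :
  \sum_i ((b i)%:R : R) = #|[set i | b i]|%:R.
Proof.
rewrite -sumr_const [RHS]big_mkcond /=; apply: eq_bigr => i _.
by rewrite inE; case: (b i).
Qed.

Lemma sumr_eq_natl (R : nzSemiRingType) (I : finType) (y : I) (f : I -> R) :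
  \sum_i (i == y)%:R * f i = f y.
Proof.
by rewrite (bigD1 y) //= eqxx mul1r big1 ?addr0 // => i /negbTE ->; rewrite mul0r.
Qed.

Lemma sumr_enum_val (R : nmodType) (T : finType) (F : T -> R) :
  \sum_(l < #|T|) F (enum_val l) = \sum_x F x.
Proof. exact: esym (big_enum_val F). Qed.

Lemma mxdirect_sum_partition (F : fieldType) (I : finType) (P : pred I) n
    (A_ : I -> 'M[F]_n) :
  mxdirect (\sum_i A_ i) -> ((\sum_(i | P i) A_ i) :&: (\sum_(i | ~~ P i) A_ i) = 0)%MS.
Proof.
move/mxdirectP; rewrite /= (bigID P) [RHS](bigID P) /=.
set SP := (\sum_(i | P i) A_ i)%MS; set SnP := (\sum_(i | ~~ P i) A_ i)%MS => dxA.
have leP : (\rank SP <= \sum_(i | P i) \rank (A_ i))%N := (mxrank_sum_leqif _).1.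
have lenP : (\rank SnP <= \sum_(i | ~~ P i) \rank (A_ i))%N := (mxrank_sum_leqif _).1.
apply/eqP; rewrite -mxrank_eq0; have := mxrank_sum_cap SP SnP.
lia.
Qed.

Lemma sub_direct_addsmx (F : fieldType) m1 m2 m3 n
    (A : 'M[F]_(m1, n)) (A' : 'M_(m2, n)) (B : 'M_(m3, n)) :
  (A' <= A)%MS -> (A <= A' + B)%MS -> (A :&: B = 0)%MS -> (A <= A')%MS.
Proof.
move=> sA'A sAA'B AB0.
have: (A <= (A' + B) :&: A)%MS by rewrite sub_capmx sAA'B submx_refl.
by rewrite -(matrix_modl B sA'A) capmxC AB0 addsmx0.
Qed.

Lemma hdist_le_dim d q (x y : hvert d q) : (hdist x y <= d)%N.
Proof. by rewrite -[X in (_ <= X)%N]card_ord max_card. Qed.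

Lemma hdist_geodesicE d q (u0 x z : hvert d q) :
  (hdist u0 z <= hdist u0 x)%N && (hdist x z == hdist u0 x - hdist u0 z)%N =
  [forall i, (z i == u0 i) || (x i == z i)].
Proof.
rewrite /hdist.
set A := [set i | u0 i != z i]; set B := [set i | u0 i != x i]; set C := [set i | x i != z i].
case: forallP => [geo | /forallP].
  have sAB : A \subset B.
    apply/subsetP => i; rewrite !inE; case/orP: (geo i) => /eqP-> //.
    by rewrite eqxx.
  have -> : C = B :\: A.
    by apply/setP => i; rewrite !inE; case/orP: (geo i) => /eqP->; rewrite eqxx /= ?andNb // eq_sym.
  by rewrite subset_leq_card // cardsD (setIidPr sAB) eqxx.
rewrite negb_forall => /existsP[i]; rewrite negb_or => /andP[zi xi].
have sBAC : B \subset A :|: C.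
  by apply/subsetP => j; rewrite !inE; case: (eqVneq (u0 j) (z j)) => // ->; rewrite eq_sym.
have iAC : i \in A :&: C by rewrite !inE xi eq_sym zi.
have := subset_leq_card sBAC; have := cardsUI A C.
have : (0 < #|A :&: C|)%N by apply/card_gt0P; exists i.
move=> ACpos sB cUI; apply/negbTE/negP => /andP[le /eqP eq]; lia.
Qed.

Lemma hdist_eq1E (R : nzSemiRingType) d q (x y : hvert d q) :
  ((hdist x y == 1)%:R : R) = \sum_i [forall j, (x j != y j) == (j == i)]%:R.
Proof.
rewrite /hdist; set D := [set j | x j != y j].
have DE i : [forall j, (x j != y j) == (j == i)] = (D == [set i]).
  apply/forallP/eqP => [Di | /setP Di j]; last by move: (Di j); rewrite !inE => ->.
  by apply/setP => j; rewrite !inE; apply/eqP: (Di j).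
under eq_bigr do rewrite DE.
have [/cards1P[i ->] | D1] := boolP (#|D| == 1)%N.
  rewrite (bigD1 i) //= eqxx big1 ?addr0 // => j ji.
  by rewrite (inj_eq set1_inj) eq_sym (negbTE ji).
by rewrite big1 // => i _; case: eqP => // Di; rewrite Di cards1 eqxx in D1.
Qed.

Lemma sum_hvert_prod (R : comNzSemiRingType) d q (F : 'I_d -> 'I_q -> R) :
  \sum_(x : hvert d q) \prod_i F i (x i) = \prod_i \sum_c F i c.
Proof. exact: esym (bigA_distr_bigA F). Qed.

Lemma fvec_ext (R : fieldType) d q (f g : hvert d q -> R) : f =1 g -> fvec f = fvec g.
Proof. by move=> fg; apply/rowP => k; rewrite !mxE fg. Qed.

Lemma hadj_prodf_eigen (R : fieldType) d q (G : 'I_d -> 'I_q -> R) (lam : 'I_d -> R) :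
  (forall i c, \sum_(b | b != c) G i b = lam i * G i c) ->
  fvec (fun x => \prod_i G i (x i)) *m hadj R d q =
  (\sum_i lam i) *: fvec (fun x => \prod_i G i (x i)).
Proof.
move=> Geig; apply/rowP => k; rewrite !mxE mulr_suml; set y := enum_val k.
pose F i j c := G j c * ((c != y j) == (j == i))%:R.
rewrite (eq_bigr (fun l => \sum_i \prod_j F i j ((enum_val l : hvert d q) j))) => [|l _].
  rewrite (sumr_enum_val (fun x : hvert d q => \sum_i \prod_j F i j (x j))) exchange_big /=.
  apply: eq_bigr => i _; rewrite sum_hvert_prod.
  have factorE j : \sum_c F i j c = if j == i then lam i * G i (y i) else G j (y j).
    rewrite /F; case: eqVneq => [-> | _]; last first.
      by under eq_bigr do rewrite eqbF_neg negbK mulrC; rewrite sumr_eq_natl.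
    under eq_bigr do rewrite eqb_id.
    rewrite -Geig (bigD1 (y i)) //= eqxx mulr0 add0r.
    by apply: eq_bigr => c cy; rewrite cy mulr1.
  rewrite (eq_bigr _ (fun j _ => factorE j)) (bigD1 i) //= eqxx [in RHS](bigD1 i) //= -mulrA.
  by congr (_ * (_ * _)); apply: eq_bigr => j /negbTE ->.
rewrite !mxE hdist_eq1E mulr_sumr; apply: eq_bigr => i _.
by rewrite big_split /= prodr_natb.
Qed.

Section ProductFunctions.

Variables (R : fieldType) (d q : nat) (u0 : hvert d q).

(* The factor of index b on coordinate i: the constant 1 for b = u0 i, so that
   only the coordinates where z differs from u0 contribute to [tensvec F z]. *)
Definition coord_factor (F : 'I_q -> 'I_q -> R) (i : 'I_d) (b c : 'I_q) : R :=
  if b == u0 i then 1 else F b c.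

Definition tensvec (F : 'I_q -> 'I_q -> R) (z : hvert d q) : 'rV[R]_#|hvert d q| :=
  fvec (fun x => \prod_i coord_factor F i (z i) (x i)).

Definition tspan (F : 'I_q -> 'I_q -> R) (t : nat) :=
  (\sum_(z : hvert d q | (hdist u0 z <= t)%N) <<tensvec F z>>)%MS.

Lemma tensvec_expand (F : 'I_q -> 'I_q -> R) (w : 'I_d -> 'I_q -> R) :
  fvec (fun x => \prod_i \sum_b w i b * coord_factor F i b (x i)) =
  \sum_(z : hvert d q) (\prod_i w i (z i)) *: tensvec F z.
Proof.
apply/rowP => k; rewrite !mxE summxE bigA_distr_bigA.
by apply: eq_bigr => z _; rewrite !mxE big_split.
Qed.

Lemma expand_sub_tspan (F : 'I_q -> 'I_q -> R) (w : 'I_d -> 'I_q -> R) t :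
  (forall z : hvert d q, \prod_i w i (z i) != 0 -> (hdist u0 z <= t)%N) ->
  (fvec (fun x => \prod_i \sum_b w i b * coord_factor F i b (x i)) <= tspan F t)%MS.
Proof.
move=> supp_w; rewrite tensvec_expand; apply/summx_sub => z _.
have [->|wz] := eqVneq (\prod_i w i (z i)) 0; first by rewrite scale0r sub0mx.
by rewrite scalemx_sub // (sumsmx_sup z) ?supp_w // genmxE.
Qed.

(* Expanding a factor a F(z_i) + s of [tensvec F' z] replaces z_i either by
   itself or by u0 i, which never increases the distance to u0. *)
Lemma tspan_affine (F F' : 'I_q -> 'I_q -> R) (a s : R) t :
  (forall b c, F' b c = a * F b c + s) -> (tspan F' t <= tspan F t)%MS.
Proof.
move=> F'E; apply/sumsmx_subP => z zt; rewrite genmxE.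
pose w i b : R :=
  if z i == u0 i then (b == u0 i)%:R else (b == z i)%:R * a + (b == u0 i)%:R * s.
have coordE i c : coord_factor F' i (z i) c = \sum_b w i b * coord_factor F i b c.
  rewrite /w; case: eqVneq => [zu | zu]; first by rewrite sumr_eq_natl /coord_factor zu !eqxx.
  under eq_bigr do rewrite mulrDl -!mulrA.
  by rewrite big_split /= !sumr_eq_natl /coord_factor eqxx (negbTE zu) F'E mulr1.
rewrite /tensvec (fvec_ext (fun x => eq_bigr _ (fun i _ => coordE i (x i)))).
apply: expand_sub_tspan => z' /prodf_neq0 wz'; apply: leq_trans zt.
apply/subset_leq_card/subsetP => i; rewrite !inE eq_sym => z'u.
move: (wz' i isT); rewrite /w (negbTE z'u).
case: ifP => [_|/negbT zu]; first by rewrite eqxx.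
have [<- _|_] := eqVneq (z' i) (z i); first by rewrite eq_sym.
by rewrite !mul0r addr0 eqxx.
Qed.

Definition kdelta (b c : 'I_q) : R := (c == b)%:R.

(* For b <> u0 i, an eigenvector of K_q for the eigenvalue -1. *)
Definition keig (b c : 'I_q) : R := q%:R * kdelta b c - 1.

Lemma fz_tensvec z : fz R u0 z = tensvec kdelta z.
Proof.
apply/rowP => k; rewrite !mxE hdist_geodesicE.
transitivity ([forall i, (z i == u0 i) || (enum_val k i == z i)]%:R : R); first by case: forallP.
by rewrite -prodr_natb; apply: eq_bigr => i _; rewrite /coord_factor /kdelta; case: eqP.
Qed.

Lemma sum_HomSp_tspan t : (\sum_(j < t.+1) HomSp R u0 j == tspan kdelta t)%MS.
Proof.
apply/andP; split; apply/sumsmx_subP.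
  move=> j _; apply/sumsmx_subP => z /eqP zj.
  by rewrite (sumsmx_sup z) ?fz_tensvec // zj -ltnS.
move=> z zt; have zt' : (hdist u0 z < t.+1)%N by [].
by rewrite (sumsmx_sup (Ordinal zt')) //= /HomSp (sumsmx_sup z) // fz_tensvec.
Qed.

Lemma coord_factor_kdelta_span (G : 'I_q -> R) i c :
  G c = \sum_b (if b == u0 i then G (u0 i) else G b - G (u0 i)) * coord_factor kdelta i b c.
Proof.
rewrite (bigD1 (u0 i)) //= /coord_factor !eqxx mulr1 /kdelta.
rewrite (eq_bigr (fun b => (b == c)%:R * (G b - G (u0 i)))) => [|b /negbTE ->]; last first.
  by rewrite eq_sym mulrC.
have [-> | cu] := eqVneq c (u0 i); first by rewrite big1 ?addr0 // => b /negbTE ->; rewrite mul0r.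
rewrite (bigD1 c) //= eqxx mul1r big1 ?addr0 => [|b /andP[_ /negbTE ->]]; last by rewrite mul0r.
by rewrite addrC subrK.
Qed.

Lemma tspan_full : (1%:M <= tspan kdelta d)%MS.
Proof.
apply/row_subP => k; rewrite row1; set y := enum_val k.
pose w i b : R := if b == u0 i then (u0 i == y i)%:R else (b == y i)%:R - (u0 i == y i)%:R.
have -> : delta_mx 0 k = fvec (fun x => \prod_i \sum_b w i b * coord_factor kdelta i b (x i)).
  apply/rowP => l; rewrite !mxE.
  under eq_bigr => i _ do rewrite -(coord_factor_kdelta_span (fun c => (c == y i)%:R)).
  rewrite prodr_natb eqxx /= -(inj_eq enum_val_inj).
  congr ((nat_of_bool _)%:R); apply/idP/idP => [/eqP-> | /forallP eqy]; first exact/forallP.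
  by apply/eqP/ffunP => i; apply/eqP.
by apply: expand_sub_tspan => z _; apply: hdist_le_dim.
Qed.

Lemma tspan_kdelta_keig t : (q%:R : R) != 0 -> (tspan kdelta t == tspan keig t)%MS.
Proof.
move=> qR_neq0; apply/andP; split.
  apply: (@tspan_affine _ _ q%:R^-1 q%:R^-1) => b c.
  by rewrite /keig mulrBr mulKf // mulr1 subrK.
exact: (@tspan_affine _ _ q%:R (-1)).
Qed.

Hypothesis q_gt0 : (0 < q)%N.

Lemma sum_keig b : \sum_c keig b c = 0.
Proof.
rewrite /keig sumrB -mulr_sumr sumr_const card_ord /kdelta.
by rewrite (bigD1 b) //= eqxx big1 ?addr0 ?mulr1 ?subrr // => c /negbTE ->.
Qed.

Lemma tensvec_keig_eigen z : (tensvec keig z <= Lsp R d q (hdist u0 z))%MS.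
Proof.
apply/eigenspaceP.
pose lam i : R := if z i == u0 i then q%:R - 1 else -1.
rewrite /tensvec (@hadj_prodf_eigen _ _ _ (fun i => coord_factor keig i (z i)) lam) => [|i c].
  congr (_ *: _); rewrite /theta /hdist.
  rewrite (eq_bigr (fun i => (q%:R - 1) - q%:R * (u0 i != z i)%:R)) => [|i _].
    by rewrite sumrB -mulr_sumr sumr_natb sumr_const card_ord !natrM natrB // mulr_natr.
  by rewrite /lam eq_sym; case: eqP => _ /=; rewrite ?mulr0 ?subr0 // mulr1 addrAC subrr add0r.
rewrite /coord_factor /lam; case: ifP => _.
  by rewrite sumr_const cardC1 card_ord mulr1 -subn1 natrB.
have /eqP := sum_keig (z i); rewrite (bigD1 c) //= addrC addr_eq0 => /eqP->.
by rewrite mulN1r.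
Qed.

Lemma tspan_keig_sub_Lsp t :
  (tspan keig t <= \sum_(j < d.+1 | (j < t.+1)%N) Lsp R d q j)%MS.
Proof.
apply/sumsmx_subP => z zt; rewrite genmxE.
have zd : (hdist u0 z < d.+1)%N by rewrite ltnS hdist_le_dim.
by rewrite (sumsmx_sup (Ordinal zd)) ?tensvec_keig_eigen.
Qed.

Lemma tspan_keig_split t :
  (tspan keig d <= tspan keig t + \sum_(j < d.+1 | ~~ (j < t.+1)%N) Lsp R d q j)%MS.
Proof.
apply/sumsmx_subP => z _; rewrite genmxE.
have [zt | tz] := leqP (hdist u0 z) t.
  by apply: submx_trans (addsmxSl _ _); rewrite (sumsmx_sup z) // genmxE.
apply: submx_trans (addsmxSr _ _).
have zd : (hdist u0 z < d.+1)%N by rewrite ltnS hdist_le_dim.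
by rewrite (sumsmx_sup (Ordinal zd)) ?tensvec_keig_eigen //= -leqNgt.
Qed.

End ProductFunctions.

Lemma Lsp_mxdirect (R : numFieldType) d q :
  (0 < q)%N -> mxdirect (\sum_(j < d.+1) Lsp R d q j).
Proof.
move=> q_gt0; apply: mxdirect_sum_eigenspace => i j _ _ /addrI/oppr_inj/eqP.
by rewrite eqr_nat eqn_pmul2l // => /eqP/val_inj.
Qed.

Theorem proposition1p5 (R : realFieldType) (d q : nat) (hd : (1 <= d)%N) (hq : (2 <= q)%N)
  (u0 : hvert d q) (t : nat) (ht : (t <= d)%N) :
  ((\sum_(j < t.+1) HomSp R u0 j) == (\sum_(j < t.+1) Lsp R d q j))%MS.
Proof.
have q_gt0 : (0 < q)%N by apply: ltnW.
have qR_neq0 : (q%:R : R) != 0 by rewrite pnatr_eq0 -lt0n.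
apply/eqmxP; apply: eqmx_trans (eqmxP (sum_HomSp_tspan R u0 t)) _.
apply: eqmx_trans (eqmxP (tspan_kdelta_keig u0 t qR_neq0)) _; apply/eqmxP.
rewrite (big_ord_widen d.+1 (Lsp R d q)) //.
apply/andP; split; first exact: tspan_keig_sub_Lsp.
apply: sub_direct_addsmx (tspan_keig_sub_Lsp R u0 q_gt0 t) _ _.
  apply: submx_trans (submx1 _) _; apply: submx_trans (tspan_keig_split R u0 q_gt0 t).
  by rewrite -(eqmxP (tspan_kdelta_keig u0 d qR_neq0)) tspan_full.
exact: mxdirect_sum_partition (Lsp_mxdirect R d q_gt0).
Qed.
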